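(* Let $0<i_1<i_2<\cdots<i_L$ be integers, $\mathcal S=\{x_0,x_{i_1},\ldots,x_{i_L}\}$, and let $d_{RRA}^{\mathcal S}$ be the corresponding restricted right-arm rotation distance. Let $T_1,T_2$ be finite rooted binary trees each with $n$ nodes, $n\ge3$, such that $d_{RRA}^{\mathcal S}(T_1,T_2)$ is defined. Then $d_{RRA}^{\mathcal S}(T_1,T_2)\le 4n-8$.
   Context: Trees: finite rooted binary trees, each internal vertex (node) having a left and a right child. The right arm consists of the root and all nodes reachable from the root by a path of right edges; the level of a node is its distance (number of edges) from the root. Right rotation at a node $N$ whose left child $M$ is a node (with $A,B$ the left and right subtrees of $M$, $C$ the right subtree of $N$) replaces the subtree at $N$ by one whose root has left subtree $A$ and whose right child is a node with left subtree $B$ and right subtree $C$; left rotation at $N$ is the inverse operation. Rotations do not change the number of nodes. For $\mathcal S=\{x_0,x_{i_1},\ldots,x_{i_L}\}$, $d_{RRA}^{\mathcal S}(T_1,T_2)$ is the minimal number of rotations, each performed at a node on the right arm at one of the levels $0,i_1,\ldots,i_L$, required to transform $T_1$ into $T_2$; it is defined when such a sequence of rotations exists. *)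

From Stdlib Require Import Arith List Sorted.
Import ListNotations.

Inductive tree : Type :=
| Leaf : tree
| Node : tree -> tree -> tree.

(* number of nodes (internal vertices) *)
Fixpoint nodes (t : tree) : nat :=
  match t with
  | Leaf => 0
  | Node l r => S (nodes l + nodes r)
  end.

Definition right_rot_root (t t' : tree) : Prop :=
  exists A B C, t = Node (Node A B) C /\ t' = Node A (Node B C).

Definition left_rot_root (t t' : tree) : Prop :=
  exists A B C, t = Node A (Node B C) /\ t' = Node (Node A B) C.

Definition rot_root (t t' : tree) : Prop := right_rot_root t t' \/ left_rot_root t t'.

Fixpoint rot_arm (k : nat) (t t' : tree) : Prop :=
  match k with
  | 0 => rot_root t t'
  | S k' =>
      match t, t' with
      | Node l r, Node l' r' => l = l' /\ rot_arm k' r r'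
      | _, _ => False
      end
  end.

Definition allowed (is : list nat) (k : nat) : Prop := k = 0 \/ In k is.

Definition rra_step (is : list nat) (t t' : tree) : Prop :=
  exists k, allowed is k /\ rot_arm k t t'.

Inductive rra_path (is : list nat) : nat -> tree -> tree -> Prop :=
| rra_refl t : rra_path is 0 t t
| rra_cons m t u v : rra_step is t u -> rra_path is m u v -> rra_path is (S m) t v.

Definition rra_defined (is : list nat) (t t' : tree) : Prop :=
  exists m, rra_path is m t t'.

Definition rra_dist_le (is : list nat) (t t' : tree) (d : nat) : Prop :=
  exists m, m <= d /\ rra_path is m t t'.

From Stdlib Require Import Arith List Sorted Lia.
Import ListNotations.

(* Describe a tree with root (x, y) by its pendant subtrees: the right children
   along the left arm of x, bottom-up, followed by the left children along the
   right arm of y.  A rotation at the root only changes how this sequence is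
   attached, and a rotation at level k > p keeps its first p entries and the
   total size of the rest.  Every allowed level other than 0 is at least
   i_1 = p + 1, so this pair is invariant along allowed rotation sequences.
   Conversely every tree with n >= 3 nodes reaches, within 2n - 4 allowed
   rotations, a canonical tree determined by the pair: right rotations at the
   root move all pendants onto the right arm; then, rotating only at the root
   and at level i_1, each pendant after the p-th is split into leaves (one
   rotation per node) while the leaves are absorbed into a left comb (one
   rotation per leaf, sparing the last two).  Both trees reach the same
   canonical tree, whence 4n - 8. *)

Fixpoint of_right_arm (l : list tree) : tree :=
  match l with [] => Leaf | a :: l' => Node a (of_right_arm l') end.

Fixpoint right_arm (t : tree) : list tree :=
  match t with Leaf => [] | Node a b => a :: right_arm b end.

Definition left_comb (l : list tree) : tree := fold_left Node l Leaf.

Fixpoint left_arm (t : tree) : list tree :=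
  match t with Leaf => [] | Node a b => left_arm a ++ [b] end.

Definition pendants (t : tree) : list tree :=
  match t with Leaf => [] | Node x y => left_arm x ++ right_arm y end.

Definition hinge (l : list tree) (j : nat) : tree :=
  Node (left_comb (firstn j l)) (of_right_arm (skipn j l)).

Definition list_nodes (l : list tree) : nat := list_sum (map nodes l).

Definition weight (l : list tree) : nat := length l + list_nodes l.

Definition signature (p : nat) (t : tree) : list tree * nat :=
  (firstn p (pendants t), weight (skipn p (pendants t))).

Definition canonical (s : list tree * nat) : tree :=
  let (P, W) := s in hinge (P ++ repeat Leaf W) (W - 2).

Lemma list_nodes_cons t l : list_nodes (t :: l) = nodes t + list_nodes l.
Proof. reflexivity. Qed.

Lemma weight_cons t l : weight (t :: l) = S (nodes t + weight l).
Proof. unfold weight, list_nodes; simpl; lia. Qed.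

Lemma weight_app l1 l2 : weight (l1 ++ l2) = weight l1 + weight l2.
Proof. unfold weight, list_nodes; rewrite length_app, map_app, list_sum_app; lia. Qed.

Lemma weight_small l : weight l < 2 -> l = repeat Leaf (weight l).
Proof.
  intro Hl; destruct l as [|[|x y] [|t l]]; try reflexivity;
    unfold weight, list_nodes in Hl; simpl in Hl; lia.
Qed.

Lemma of_right_armK t : of_right_arm (right_arm t) = t.
Proof. induction t; simpl; congruence. Qed.

Lemma left_combK t : left_comb (left_arm t) = t.
Proof.
  induction t as [|a IHa b _]; [reflexivity|].
  unfold left_comb in *; simpl; rewrite fold_left_app, IHa; reflexivity.
Qed.

Lemma weight_right_arm t : weight (right_arm t) = nodes t.
Proof. induction t; [reflexivity|]; simpl right_arm; rewrite weight_cons; simpl; lia. Qed.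

Lemma weight_left_arm t : weight (left_arm t) = nodes t.
Proof.
  induction t as [|a IHa b _]; [reflexivity|].
  simpl left_arm; rewrite weight_app, weight_cons, IHa; change (weight []) with 0; simpl; lia.
Qed.

Lemma nodes_pendants x y : nodes (Node x y) = S (weight (pendants (Node x y))).
Proof. simpl; rewrite weight_app, weight_left_arm, weight_right_arm; reflexivity. Qed.

Lemma rot_root_sym t t' : rot_root t t' -> rot_root t' t.
Proof. intros [(A & B & C & -> & ->)|(A & B & C & -> & ->)]; [right|left]; now exists A, B, C. Qed.

Lemma rot_arm_sym k t t' : rot_arm k t t' -> rot_arm k t' t.
Proof.
  revert t t'; induction k as [|k IHk]; simpl; intros t t' Hrot.
  - now apply rot_root_sym.
  - destruct t, t'; try contradiction; destruct Hrot; auto.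
Qed.

Section Allowed.

Variable is : list nat.

Lemma rra_step_root t t' : rot_root t t' -> rra_step is t t'.
Proof. intro Hrot; exists 0; split; [now left | exact Hrot]. Qed.

Lemma rra_step_sym t t' : rra_step is t t' -> rra_step is t' t.
Proof. intros (k & Hk & Hrot); exists k; split; [exact Hk | now apply rot_arm_sym]. Qed.

Lemma rra_path_app m1 m2 a b c :
  rra_path is m1 a b -> rra_path is m2 b c -> rra_path is (m1 + m2) a c.
Proof. induction 1; intros; simpl; [assumption | econstructor; eauto]. Qed.

Lemma rra_path_sym m a b : rra_path is m a b -> rra_path is m b a.
Proof.
  induction 1 as [|m t u v Hstep _ IH]; [constructor|].
  rewrite <- Nat.add_1_r; apply rra_path_app with u; [exact IH|].
  apply rra_cons with t; [now apply rra_step_sym | constructor].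
Qed.

Lemma rra_dist_le_refl a : rra_dist_le is a a 0.
Proof. exists 0; split; [reflexivity | constructor]. Qed.

Lemma rra_dist_le_step a b : rra_step is a b -> rra_dist_le is a b 1.
Proof. intro Hstep; exists 1; split; [reflexivity | econstructor; [exact Hstep | constructor]]. Qed.

Lemma rra_dist_le_trans d1 d2 a b c :
  rra_dist_le is a b d1 -> rra_dist_le is b c d2 -> rra_dist_le is a c (d1 + d2).
Proof.
  intros (m1 & Hm1 & Hab) (m2 & Hm2 & Hbc); exists (m1 + m2); split; [lia|].
  now apply rra_path_app with b.
Qed.

Lemma rra_dist_le_weaken d d' a b : d <= d' -> rra_dist_le is a b d -> rra_dist_le is a b d'.
Proof. intros Hd (m & Hm & Hab); exists m; split; [lia | exact Hab]. Qed.

Lemma rra_dist_le_sym d a b : rra_dist_le is a b d -> rra_dist_le is b a d.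
Proof. intros (m & Hm & Hab); exists m; split; [exact Hm | now apply rra_path_sym]. Qed.

End Allowed.

Lemma rot_root_pendants t t' : rot_root t t' -> pendants t = pendants t'.
Proof.
  intros [(A & B & C & -> & ->)|(A & B & C & -> & ->)]; simpl; now rewrite <- app_assoc.
Qed.

Lemma rot_root_nodes t t' : rot_root t t' -> nodes t = nodes t'.
Proof. intros [(A & B & C & -> & ->)|(A & B & C & -> & ->)]; simpl; lia. Qed.

Lemma rot_arm_right_arm k r r' : rot_arm k r r' ->
  exists Q Z Z', right_arm r = Q ++ Z /\ right_arm r' = Q ++ Z' /\
                 length Q = k /\ weight Z = weight Z'.
Proof.
  revert r r'; induction k as [|k IHk]; intros r r' Hrot.
  - exists [], (right_arm r), (right_arm r'); rewrite !weight_right_arm.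
    repeat split; now apply rot_root_nodes.
  - destruct r as [|a r], r' as [|a' r']; try contradiction; destruct Hrot as [<- Hrot].
    destruct (IHk _ _ Hrot) as (Q & Z & Z' & Hr & Hr' & HQ & HZ).
    exists (a :: Q), Z, Z'; simpl; rewrite Hr, Hr'; repeat split; auto.
Qed.

Lemma rot_arm_signature p k t t' :
  k = 0 \/ p < k -> rot_arm k t t' -> signature p t = signature p t'.
Proof.
  unfold signature; intros [-> | Hk] Hrot.
  - simpl in Hrot; now rewrite (rot_root_pendants _ _ Hrot).
  - destruct k as [|k]; [lia|].
    destruct t as [|x r], t' as [|x' r']; try contradiction; destruct Hrot as [<- Hrot].
    destruct (rot_arm_right_arm _ _ _ Hrot) as (Q & Z & Z' & Hr & Hr' & HQ & HZ).
    simpl pendants; rewrite Hr, Hr', !app_assoc.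
    assert (Hp : p <= length (left_arm x ++ Q)) by (rewrite length_app; lia).
    rewrite !firstn_app, !skipn_app, !weight_app.
    replace (p - length (left_arm x ++ Q)) with 0 by lia.
    simpl; now rewrite HZ.
Qed.

Lemma rra_path_signature is p m t t' :
  (forall k, allowed is k -> k = 0 \/ p < k) ->
  rra_path is m t t' -> signature p t = signature p t'.
Proof.
  intros Hlevels; induction 1 as [|m t u v (k & Hk & Hrot) _ IH]; [reflexivity|].
  rewrite <- IH; exact (rot_arm_signature _ _ _ _ (Hlevels k Hk) Hrot).
Qed.

Lemma allowed_sorted_head i l k :
  Sorted lt (i :: l) -> allowed (i :: l) k -> k = 0 \/ i <= k.
Proof.
  intros Hsorted [-> | [-> | Hk]]; auto.
  apply Sorted_StronglySorted in Hsorted; [|intros a b c; lia].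
  apply StronglySorted_inv in Hsorted as [_ Hl].
  rewrite Forall_forall in Hl; right; specialize (Hl k Hk); lia.
Qed.

Lemma hinge_app L R j : j <= length L ->
  hinge (L ++ R) j = Node (left_comb (firstn j L)) (of_right_arm (skipn j L ++ R)).
Proof.
  intro Hj; unfold hinge; rewrite firstn_app, skipn_app.
  replace (j - length L) with 0 by lia; simpl; now rewrite app_nil_r.
Qed.

Lemma hinge_length L R : hinge (L ++ R) (length L) = Node (left_comb L) (of_right_arm R).
Proof. rewrite hinge_app, firstn_all, skipn_all by reflexivity; reflexivity. Qed.

Lemma hinge_left_arm x y : Node x y = hinge (pendants (Node x y)) (length (left_arm x)).
Proof. simpl pendants; now rewrite hinge_length, left_combK, of_right_armK. Qed.

Lemma hinge_rot_root l j : j < length l -> rot_root (hinge l (S j)) (hinge l j).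
Proof.
  intro Hj; destruct (nth_split l Leaf Hj) as (L & R & -> & <-).
  set (b := nth _ _ _).
  replace (S (length L)) with (length (L ++ [b])) by (rewrite length_app; simpl; lia).
  rewrite hinge_length.
  replace (L ++ b :: R) with ((L ++ [b]) ++ R) by now rewrite <- app_assoc.
  rewrite hinge_length.
  unfold left_comb; rewrite fold_left_app.
  left; now exists (left_comb L), b, (of_right_arm R).
Qed.

Lemma of_right_arm_rot_arm Q Z Z' : rot_root (of_right_arm Z) (of_right_arm Z') ->
  rot_arm (length Q) (of_right_arm (Q ++ Z)) (of_right_arm (Q ++ Z')).
Proof. induction Q; simpl; auto. Qed.

Lemma hinge_split P X x y Y :
  rot_arm (S (length P)) (hinge (P ++ X ++ Node x y :: Y) (length X))
                         (hinge (P ++ X ++ x :: y :: Y) (length X)).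
Proof.
  rewrite !app_assoc, !hinge_app by (rewrite length_app; lia).
  assert (HQ : length (skipn (length X) (P ++ X)) = length P)
    by (rewrite length_skipn, length_app; lia).
  simpl; split; [reflexivity|]; rewrite <- HQ.
  apply of_right_arm_rot_arm; left; now exists x, y, (of_right_arm Y).
Qed.

Section Canonical.

Variable is : list nat.

Lemma hinge_descend l j : j <= length l -> rra_dist_le is (hinge l j) (hinge l 0) j.
Proof.
  induction j as [|j IHj]; intro Hj; [apply rra_dist_le_refl|].
  apply (rra_dist_le_trans is 1 j _ (hinge l j)); [|apply IHj; lia].
  apply rra_dist_le_step, rra_step_root, hinge_rot_root; lia.
Qed.

(* Exactly [a] pendants sit in the left comb, so the head of [H] stays on the
   right arm at level [S (length P)]. *)
Lemma hinge_sweep P H a : In (S (length P)) is -> 2 <= weight H ->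
  rra_dist_le is (hinge (P ++ repeat Leaf a ++ H) a)
    (hinge (P ++ repeat Leaf (a + weight H)) (a + weight H - 2))
    (list_nodes H + weight H - 2).
Proof.
  intros Hlevel Hw; revert a Hw.
  induction H as [H IH] using (induction_ltof1 _ (fun H => list_nodes H + weight H)).
  unfold ltof in IH; intros a Hw.
  destruct H as [|[|x y] H]; [change (weight []) with 0 in Hw; lia| |].
  - rewrite list_nodes_cons, weight_cons in *; cbn [nodes Nat.add] in *.
    destruct (le_lt_dec 2 (weight H)) as [HwH | HwH].
    + replace (repeat Leaf a ++ Leaf :: H) with (repeat Leaf (S a) ++ H)
        by (change (repeat Leaf (S a)) with (Leaf :: repeat Leaf a);
            now rewrite repeat_cons, <- app_assoc).
      replace (list_nodes H + S (weight H) - 2) with (1 + (list_nodes H + weight H - 2)) by lia.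
      apply rra_dist_le_trans with (hinge (P ++ repeat Leaf (S a) ++ H) (S a)).
      * apply rra_dist_le_step, rra_step_root, rot_root_sym, hinge_rot_root.
        rewrite !length_app, repeat_length; lia.
      * replace (a + S (weight H)) with (S a + weight H) by lia.
        apply IH; lia.
    + assert (HH : H = [Leaf]).
      { rewrite (weight_small H) by lia; now replace (weight H) with 1 by lia. }
      subst H; change (weight [Leaf]) with 1.
      rewrite (repeat_app Leaf a 2), Nat.add_sub.
      apply rra_dist_le_weaken with 0; [lia | apply rra_dist_le_refl].
  - assert (Hsplit : rra_dist_le is (hinge (P ++ repeat Leaf a ++ Node x y :: H) a)
                                    (hinge (P ++ repeat Leaf a ++ x :: y :: H) a) 1).
    { pose proof (hinge_split P (repeat Leaf a) x y H) as Hrot; rewrite repeat_length in Hrot.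
      apply rra_dist_le_step; exists (S (length P)); split; [now right | exact Hrot]. }
    assert (Hweight : weight (Node x y :: H) = weight (x :: y :: H))
      by (rewrite !weight_cons; simpl; lia).
    assert (Hnodes : list_nodes (Node x y :: H) = S (list_nodes (x :: y :: H)))
      by (rewrite !list_nodes_cons; simpl; lia).
    rewrite Hweight, Hnodes in *.
    replace (S (list_nodes (x :: y :: H)) + weight (x :: y :: H) - 2)
      with (1 + (list_nodes (x :: y :: H) + weight (x :: y :: H) - 2)) by lia.
    apply rra_dist_le_trans with (1 := Hsplit).
    apply IH; lia.
Qed.

Lemma dist_to_canonical p t : In (S p) is -> 3 <= nodes t ->
  rra_dist_le is t (canonical (signature p t)) (2 * nodes t - 4).
Proof.
  intros Hlevel Hn; destruct t as [|x y]; [simpl in Hn; lia|].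
  unfold signature, canonical; rewrite nodes_pendants in *.
  rewrite hinge_left_arm at 1.
  set (l := pendants (Node x y)) in *.
  assert (Hx : length (left_arm x) <= length l) by (unfold l; simpl; rewrite length_app; lia).
  pose proof (hinge_descend _ _ Hx) as Hdescend.
  set (P := firstn p l); set (G := skipn p l).
  assert (Hl : l = P ++ G) by (symmetry; apply firstn_skipn).
  assert (Hlength : length l = length P + length G) by (rewrite Hl; apply length_app).
  assert (Hweight : weight l = weight P + weight G) by (rewrite Hl; apply weight_app).
  assert (HP : length P <= weight P) by (unfold weight; lia).
  assert (HG : weight G = length G + list_nodes G) by reflexivity.
  destruct (le_lt_dec 2 (weight G)) as [HwG | HwG].
  - assert (HPp : length P = p).
    { unfold P; rewrite length_firstn.
      assert (length G <> 0).
      { rewrite length_zero_iff_nil; intro HG0; rewrite HG0 in HwG.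
        change (weight []) with 0 in HwG; lia. }
      unfold G in *; rewrite length_skipn in *; lia. }
    rewrite <- HPp in Hlevel.
    pose proof (hinge_sweep P G 0 Hlevel HwG) as Hsweep; simpl in Hsweep; rewrite <- Hl in Hsweep.
    apply rra_dist_le_weaken with (length (left_arm x) + (list_nodes G + weight G - 2)); [lia|].
    now apply rra_dist_le_trans with (hinge l 0).
  - rewrite <- (weight_small G HwG), <- Hl; replace (weight G - 2) with 0 by lia.
    apply rra_dist_le_weaken with (length (left_arm x)); [lia | exact Hdescend].
Qed.

End Canonical.

Theorem proposition3p8 (is : list nat) (n : nat) (T1 T2 : tree) :
  is <> nil ->
  Sorted lt is ->
  Forall (fun i => 0 < i) is ->
  3 <= n ->
  nodes T1 = n -> nodes T2 = n ->
  rra_defined is T1 T2 ->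
  rra_dist_le is T1 T2 (4 * n - 8).
Proof.
  intros Hne Hsorted Hpos Hn H1 H2 [m Hpath].
  destruct is as [|i l]; [congruence|].
  destruct i as [|p]; [inversion Hpos; lia|].
  assert (Hlevels : forall k, allowed (S p :: l) k -> k = 0 \/ p < k)
    by (intros k Hk; destruct (allowed_sorted_head _ _ _ Hsorted Hk); lia).
  pose proof (rra_path_signature _ _ _ _ _ Hlevels Hpath) as Hsignature.
  pose proof (dist_to_canonical (S p :: l) p T1 (or_introl eq_refl) ltac:(lia)) as Hdist1.
  pose proof (dist_to_canonical (S p :: l) p T2 (or_introl eq_refl) ltac:(lia)) as Hdist2.
  rewrite Hsignature in Hdist1; apply rra_dist_le_sym in Hdist2.
  apply rra_dist_le_weaken with (2 * nodes T1 - 4 + (2 * nodes T2 - 4)); [lia|].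
  now apply rra_dist_le_trans with (canonical (signature p T2)).
Qed.
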